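(* Let $k\ge 0$. (1) There exists a unique $\alpha\in(0,1)$ with $P_k(\alpha)=0$; equivalently, there exists a unique $\alpha'>1$ with $P_k(\alpha')=0$, namely $\alpha'=1/\alpha$. (2) If $\beta\in\mathbb{C}$ is a root of $P_k$, then $\beta=\alpha$, $\beta=\alpha'$, or $|\beta|=1$.
   Context: For $k\ge 0$, $P_{k}(q)=1+\sum_{l=1}^{k+1} q^{4l-4}(q^4-q^3-q^2-q)$, i.e. $P_0=q^4-q^3-q^2-q+1$, $P_1=q^8-q^7-q^6-q^5+q^4-q^3-q^2-q+1$, $P_k=(q^4+1)P_{k-1}-q^4P_{k-2}$. One has $P_k(q)=q^{2k+2}\,q_k(q+q^{-1}+2)$, where $q_0(x)=x^2-5x+3$, $q_1(x)=(x^3-8x^2+17x-5)(x-1)$, $q_k=(x^2-4x+2)q_{k-1}-q_{k-2}$; all roots of $q_k$ are real (it is, up to a factor, the characteristic polynomial of a real symmetric matrix). *)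

From HB Require Import structures.
From mathcomp Require Import all_boot all_order all_algebra.
Set Implicit Arguments. Unset Strict Implicit. Unset Printing Implicit Defensive.
Import Order.TTheory GRing.Theory Num.Theory.
Local Open Scope ring_scope.

Definition P (R : nzRingType) (k : nat) : {poly R} :=
  1 + \sum_(1 <= l < k.+2) 'X^(4 * l - 4) * ('X^4 - 'X^3 - 'X^2 - 'X).

(* Put s = x + 1/x and let cheb s m be the Chebyshev-type sequence
   cheb s 0 = 1, cheb s 1 = s, cheb s (m+2) = s cheb s (m+1) - cheb s m
   (so cheb s m = U_m(s/2)).  The key identity [P_chebF] reads
       (x^2 - 1) x^(2k+3) chebF s (2k) = (x^4 - 1) P_k(x),
   where chebF s (2k) = s q_k(s+2) is, up to the factor s, the reduced
   polynomial q_k of the paper.  So, away from x^4 = 1, the roots of P_k are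
   the solutions x of x + 1/x = s for the roots s of chebF.
   A Christoffel-Darboux identity [chebF_CD] expresses
   chebF s chebD t - chebD s chebF t as (s - t) times a kernel that is
   positive both for t = s^* and for s, t >= 2.  Hence every root s of chebF
   is real ([chebF_root_real]) and chebF has at most one root s >= 2
   ([chebF_root_unique]).  Consequently every root of P_k is positive or of
   modulus 1 (negative roots are excluded because P_k > 0 on x < 0), and P_k
   has at most one root in (0, 1).  Existence of that root a follows from an
   intermediate value theorem for real polynomials over a closed numeric field
   ([real_poly_ivt]) since P_k(0) = 1 and P_k(1) < 0, and the inversion
   symmetry of the roots ([root_P_inv]) makes 1/a the unique root > 1. *)

From HB Require Import structures.
From mathcomp Require Import all_boot all_order all_algebra.
From mathcomp Require Import ring zify.
Import Order.TTheory GRing.Theory Num.Theory.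
Set Implicit Arguments.
Unset Strict Implicit.
Unset Printing Implicit Defensive.
Local Open Scope ring_scope.

Lemma nat_ind2 (Q : nat -> Prop) :
  Q 0%N -> Q 1%N -> (forall m, Q m -> Q m.+1 -> Q m.+2) -> forall m, Q m.
Proof.
move=> Q0 Q1 QS m; suff: Q m /\ Q m.+1 by case.
by elim: m => [|m [Qm Qm1]]; split=> //; apply: QS.
Qed.

Section Chebyshev.
Context {R : comNzRingType}.
Implicit Types s t x : R.

Fixpoint cheb s m : R :=
  match m with
  | 0 => 1
  | 1 => s
  | (m'.+1 as m1).+1 => s * cheb s m1 - cheb s m'
  end.

Lemma cheb0 s : cheb s 0 = 1. Proof. by []. Qed.
Lemma cheb1 s : cheb s 1 = s. Proof. by []. Qed.
Lemma chebSS s m : cheb s m.+2 = s * cheb s m.+1 - cheb s m. Proof. by []. Qed.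
#[global] Arguments cheb : simpl never.

(* Closed form: if s = x + 1/x then cheb s m = (x^(m+1) - x^-(m+1)) / (x - 1/x). *)
Lemma cheb_closed x s m : x * s = x ^+ 2 + 1 ->
  x ^+ m * (x ^+ 2 - 1) * cheb s m = x ^+ (2 * m).+2 - 1.
Proof.
move=> hs; elim/nat_ind2: m => [|| m IH0 IH1]; first by rewrite cheb0; ring.
  by rewrite cheb1; ring: hs.
have -> : x ^+ m.+2 * (x ^+ 2 - 1) * cheb s m.+2
    = x * s * (x ^+ m.+1 * (x ^+ 2 - 1) * cheb s m.+1)
      - x ^+ 2 * (x ^+ m * (x ^+ 2 - 1) * cheb s m).
  by rewrite chebSS !exprS; ring.
rewrite IH0 IH1 hs !mulnS !addSn !add0n !exprS; ring.
Qed.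

Lemma cheb_CD s t m : cheb s m.+1 * cheb t m - cheb s m * cheb t m.+1
  = (s - t) * \sum_(j < m.+1) cheb s j * cheb t j.
Proof.
elim: m => [|m IH]; first by rewrite big_ord1 /= !cheb0 !cheb1; ring.
rewrite big_ord_recr /= !chebSS [RHS]mulrDr -IH; ring.
Qed.

(* chebF s (2k) is the image of P_k under x |-> x + 1/x (see [P_chebF]);
   kernel is the Christoffel-Darboux kernel attached to the pair (chebF, chebD). *)
Definition chebD s m := cheb s m.+2 - cheb s m.+1.
Definition chebF s m := s * chebD s m - 2 * cheb s m.+1.
Definition kernel s t m :=
  chebD s m * chebD t m + 2 * \sum_(j < m.+2) cheb s j * cheb t j.

Lemma chebF_CD s t m :
  chebF s m * chebD t m - chebD s m * chebF t m = (s - t) * kernel s t m.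
Proof.
rewrite /chebF /kernel /chebD big_ord_recr /= !chebSS.
set S := \sum_(j < m.+1) _; have CD := cheb_CD s t m; rewrite -/S in CD.
have -> : forall X Y : R, (s - t) * (X + 2 * (S + Y))
    = (s - t) * (X + 2 * Y) + 2 * ((s - t) * S) by move=> X Y; ring.
rewrite -CD; ring.
Qed.

End Chebyshev.

Lemma chebF_root_eq {R : idomainType} (s t : R) m :
  chebF s m = 0 -> chebF t m = 0 -> kernel s t m != 0 -> s = t.
Proof.
move=> Fs Ft K0; apply/eqP; rewrite -subr_eq0.
have := chebF_CD s t m; rewrite Fs Ft mul0r mulr0 subrr => /esym/eqP.
by rewrite mulf_eq0 (negbTE K0) orbF.
Qed.

Lemma sum_shape_gt0 {R : numDomainType} (a : R) n (F : 'I_n.+1 -> R) :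
  0 <= a -> (forall j, 0 <= F j) -> F ord0 = 1 -> 0 < a + 2 * \sum_j F j.
Proof.
move=> a0 F0 F1; have S1 : 1 <= \sum_j F j.
  by rewrite big_ord_recl F1 lerDl sumr_ge0.
by rewrite ltr_wpDl // mulr_gt0 // (lt_le_trans ltr01 S1).
Qed.

Section ConjugateKernel.
(* Pairing s with its conjugate: the kernel is a sum of squared moduli. *)
Context {C : numClosedFieldType}.
Implicit Types s : C.

Lemma cheb_conj s m : cheb s^* m = (cheb s m)^*.
Proof.
elim/nat_ind2: m => [|| m IH0 IH1]; first by rewrite !cheb0 rmorph1.
  by rewrite !cheb1.
by rewrite !chebSS rmorphB rmorphM IH0 IH1.
Qed.

Lemma chebD_conj s m : chebD s^* m = (chebD s m)^*.
Proof. by rewrite /chebD rmorphB !cheb_conj. Qed.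

Lemma chebF_conj s m : chebF s^* m = (chebF s m)^*.
Proof. by rewrite /chebF rmorphB !rmorphM rmorph_nat chebD_conj cheb_conj. Qed.

Lemma kernel_conj_gt0 s m : 0 < kernel s s^* m.
Proof.
apply: sum_shape_gt0; first by rewrite chebD_conj mul_conjC_ge0.
  by move=> j; rewrite cheb_conj mul_conjC_ge0.
by rewrite /= !cheb0 mulr1.
Qed.

Lemma chebF_root_real s m : chebF s m = 0 -> s \is Num.real.
Proof.
move=> Fs; rewrite CrealE; apply/eqP/esym; apply: (@chebF_root_eq _ s s^* m Fs).
  by rewrite chebF_conj Fs rmorph0.
exact: lt0r_neq0 (kernel_conj_gt0 s m).
Qed.
End ConjugateKernel.

Section LargeArgument.
(* For s, t >= 2 all the terms of the kernel are nonnegative. *)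
Context {R : numDomainType}.
Implicit Types s t : R.

Lemma cheb_ge1_mono s j : 2 <= s -> 1 <= cheb s j <= cheb s j.+1.
Proof.
move=> s2; elim: j => [|j /andP[c1 c12]].
  by rewrite cheb0 cheb1 lexx (le_trans _ s2) ?ler1n.
have c2_ge0 : 0 <= cheb s j.+1 := le_trans ler01 (le_trans c1 c12).
rewrite (le_trans c1 c12) chebSS /= -subr_ge0.
have -> : s * cheb s j.+1 - cheb s j - cheb s j.+1
    = (s - 2) * cheb s j.+1 + (cheb s j.+1 - cheb s j) by ring.
by rewrite addr_ge0 ?mulr_ge0 // subr_ge0.
Qed.

Lemma kernel_ge2_gt0 s t m : 2 <= s -> 2 <= t -> 0 < kernel s t m.
Proof.
move=> s2 t2; have gs j := cheb_ge1_mono j s2; have gt j := cheb_ge1_mono j t2.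
have c_ge0 u j : 1 <= cheb u j <= cheb u j.+1 -> 0 <= cheb u j.
  by case/andP=> /(le_trans ler01).
apply: sum_shape_gt0; last by rewrite /= !cheb0 mulr1.
  by rewrite mulr_ge0 // subr_ge0; [case/andP: (gs m.+1) | case/andP: (gt m.+1)].
by move=> j; rewrite mulr_ge0 // c_ge0.
Qed.

Lemma chebF_root_unique s t m :
  2 <= s -> 2 <= t -> chebF s m = 0 -> chebF t m = 0 -> s = t.
Proof.
move=> s2 t2 Fs Ft; apply: (@chebF_root_eq _ s t m Fs Ft).
exact: lt0r_neq0 (kernel_ge2_gt0 m s2 t2).
Qed.
End LargeArgument.

Section Reduction.
Context {R : comNzRingType}.
Implicit Types x s : R.

Definition block x := x ^+ 4 - x ^+ 3 - x ^+ 2 - x.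

Lemma horner_P k x : (P R k).[x] = 1 + \sum_(i < k.+1) x ^+ (4 * i) * block x.
Proof.
rewrite /P hornerD hornerC horner_sum big_add1 /= big_mkord; congr (_ + _).
by apply: eq_bigr => i _; rewrite mulnS addKn !hornerE.
Qed.

(* Multiplying by x^4 - 1 telescopes the geometric sum defining P_k. *)
Lemma P_telescope k x :
  (x ^+ 4 - 1) * (P R k).[x] = x ^+ (4 * k.+1) * block x + (x ^+ 3 + x ^+ 2 + x - 1).
Proof.
rewrite horner_P /block; elim: k => [|k IH].
  by rewrite big_ord1 muln0 muln1; ring.
rewrite big_ord_recr /= addrA mulrDr IH [(4 * k.+2)%N]mulnS exprD.
move: (x ^+ (4 * k.+1)) => y; ring.
Qed.

Lemma P_chebF k x s : x * s = x ^+ 2 + 1 ->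
  (x ^+ 2 - 1) * x ^+ (2 * k).+3 * chebF s (2 * k) = (x ^+ 4 - 1) * (P R k).[x].
Proof.
move=> hs; rewrite P_telescope.
have E1 := cheb_closed (2 * k).+1 hs; have E2 := cheb_closed (2 * k).+2 hs.
have -> : (x ^+ 2 - 1) * x ^+ (2 * k).+3 * chebF s (2 * k)
    = x * s * (x ^+ (2 * k).+2 * (x ^+ 2 - 1) * cheb s (2 * k).+2)
      - (x * s + 2 * x) * x * (x ^+ (2 * k).+1 * (x ^+ 2 - 1) * cheb s (2 * k).+1).
  by rewrite /chebF /chebD !exprS; ring.
rewrite E1 E2 hs.
have -> : ((2 * (2 * k).+1).+2 = 4 * k + 4)%N by lia.
have -> : ((2 * (2 * k).+2).+2 = 4 * k + 6)%N by lia.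
have -> : (4 * k.+1 = 4 * k + 4)%N by lia.
rewrite /block !exprD; move: (x ^+ (4 * k)) => y; ring.
Qed.
End Reduction.

Section Substitution.
Context {F : fieldType}.
Implicit Types x y : F.

Lemma mul_add_inv x : x != 0 -> x * (x + x^-1) = x ^+ 2 + 1.
Proof. by move=> x0; rewrite mulrDr mulfV // expr2. Qed.

Lemma add_inv_inj x y : x != 0 -> y != 0 ->
  x + x^-1 = y + y^-1 -> x = y \/ x * y = 1.
Proof.
move=> x0 y0 e; have : (x - y) * (x * y - 1) = 0.
  transitivity (x * y * ((x + x^-1) - (y + y^-1))); last by rewrite e subrr mulr0.
  have hx := mulfV x0; have hy := mulfV y0; ring: hx hy.
by move/eqP; rewrite mulf_eq0 !subr_eq0 => /orP[] /eqP; [left | right].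
Qed.

Lemma root_P_chebF k x : x != 0 -> x ^+ 2 != 1 ->
  root (P F k) x -> chebF (x + x^-1) (2 * k) = 0.
Proof.
move=> x0 x2 /rootP Px; have /eqP := P_chebF k (mul_add_inv x0).
rewrite Px mulr0 mulf_eq0 mulf_eq0 subr_eq0 (negbTE x2) expf_eq0 (negbTE x0) andbF.
by move/eqP.
Qed.

Lemma chebF_root_P k x : x != 0 -> x ^+ 4 != 1 ->
  chebF (x + x^-1) (2 * k) = 0 -> root (P F k) x.
Proof.
move=> x0 x4 Fx; have /esym/eqP := P_chebF k (mul_add_inv x0).
by rewrite Fx mulr0 mulf_eq0 subr_eq0 (negbTE x4).
Qed.

Lemma root_P_inv k x : x != 0 -> x ^+ 4 != 1 -> root (P F k) x -> root (P F k) x^-1.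
Proof.
move=> x0 x4 Px; have x2 : x ^+ 2 != 1.
  by apply: contraNneq x4; rewrite (exprM x 2 2) => ->; rewrite expr1n.
apply: chebF_root_P; rewrite ?invr_eq0 ?exprVn ?invr_eq1 // invrK addrC.
exact: root_P_chebF.
Qed.
End Substitution.

Section RealPolynomials.
Context {C : numClosedFieldType}.
Implicit Types (p q r : {poly C}) (a b x z : C).

Definition real_poly p := map_poly Num.conj p = p.

Lemma real_poly_divl q r : real_poly (q * r) -> real_poly r -> r != 0 -> real_poly q.
Proof.
by move=> hqr hr r0; apply: (mulIf r0); rewrite -{1}hr -rmorphM; exact: hqr.
Qed.

Lemma real_poly_XsubC z : z \is Num.real -> real_poly ('X - z%:P).
Proof. by move=> zR; rewrite /real_poly map_polyXsubC /= conj_Creal. Qed.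

Lemma real_poly_conj_pair z : real_poly (('X - z%:P) * ('X - z^*%:P)).
Proof. by rewrite /real_poly rmorphM /= !map_polyXsubC /= conjCK mulrC. Qed.

Lemma root_conj p z : real_poly p -> root p z -> root p z^*.
Proof. by move=> hp rz; rewrite /root -{1}hp horner_map (rootP rz) rmorph0. Qed.

Lemma real_poly_const_sign p a b : real_poly p -> (size p <= 1)%N -> 0 <= p.[a] * p.[b].
Proof.
move=> hp /size1_polyC ->; rewrite !hornerC.
have hc : (p`_0)^* = p`_0 by rewrite -{2}hp coef_map.
by rewrite -{2}hc mul_conjC_ge0.
Qed.

Lemma linear_factor_sign a b z : a \is Num.real -> b \is Num.real -> z \is Num.real ->
  a < b -> z != a -> z != b -> ~~ (a < z < b) -> 0 < (a - z) * (b - z).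
Proof.
move=> aR bR zR ab za zb zab.
case: (real_ltgtP zR aR) => [za'|az|eza]; last by rewrite eza eqxx in za.
  by rewrite mulr_gt0 // subr_gt0 // (lt_trans za').
case: (real_ltgtP zR bR) => [zb'|bz|ezb]; last by rewrite ezb eqxx in zb.
  by rewrite az zb' in zab.
by rewrite nmulr_rgt0 subr_lt0 // (lt_trans ab).
Qed.

Lemma conj_pair_pos z x : z \isn't Num.real -> x \is Num.real ->
  0 < (('X - z%:P) * ('X - z^*%:P)).[x].
Proof.
move=> zNR xR; rewrite hornerM !hornerXsubC.
have -> : x - z^* = (x - z)^* by rewrite rmorphB /= (conj_Creal xR).
by rewrite mul_conjC_gt0 subr_eq0; apply: contraNneq zNR => <-.
Qed.

Lemma real_poly_split p a b : real_poly p -> a \is Num.real -> b \is Num.real ->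
  a < b -> p.[a] * p.[b] < 0 ->
  (exists2 x, a < x < b & root p x) \/
  exists q r, [/\ p = q * r, real_poly r, (1 < size r)%N & 0 < r.[a] * r.[b]].
Proof.
move=> hp aR bR ab hab.
have pa0 : p.[a] != 0 by apply: contraTneq hab => ->; rewrite mul0r ltxx.
have pb0 : p.[b] != 0 by apply: contraTneq hab => ->; rewrite mulr0 ltxx.
have /closed_rootP [z rz] : size p != 1%N.
  by apply: contraTneq hab => ps; rewrite le_gtF // real_poly_const_sign // ps.
have /factor_theorem [q pq] := rz.
have [zR | zNR] := boolP (z \is Num.real).
  have [zab | zNab] := boolP (a < z < b); first by left; exists z.
  right; exists q, ('X - z%:P); split=> //; first exact: real_poly_XsubC.
    by rewrite size_XsubC.
  rewrite !hornerXsubC linear_factor_sign //.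
    by apply: contraNneq pa0 => <-.
  by apply: contraNneq pb0 => <-.
have /factor_theorem [q2 qq2] : root q z^*.
  have zc : z^* != z by rewrite -CrealE.
  by move: (root_conj hp rz); rewrite pq rootM root_XsubC (negbTE zc) orbF.
right; exists q2, (('X - z%:P) * ('X - z^*%:P)); split.
- by rewrite pq qq2 -mulrA [_ * ('X - z%:P)]mulrC.
- exact: real_poly_conj_pair.
- by rewrite size_mul ?polyXsubC_eq0 // !size_XsubC.
by rewrite mulr_gt0 // conj_pair_pos.
Qed.

Lemma real_poly_ivt p a b : real_poly p -> a \is Num.real -> b \is Num.real ->
  a < b -> p.[a] * p.[b] < 0 -> exists2 x, a < x < b & root p x.
Proof.
move=> + aR bR ab; have [n] := ubnP (size p); elim: n p => // n IH p szp hp hab.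
have [//|[q [r [pqr hr r_gt1 rab]]]] := real_poly_split hp aR bR ab hab.
have r0 : r != 0 by rewrite -size_poly_gt0 (ltn_trans _ r_gt1).
have q0 : q != 0.
  by apply: contraTneq hab => q0; rewrite pqr q0 mul0r !horner0 mul0r ltxx.
have hq : real_poly q by apply: (real_poly_divl _ hr r0); rewrite -pqr.
have szq : (size q < n)%N.
  by move: szp r_gt1; rewrite pqr size_mul //; move: (size q) (size r) => i j; lia.
have qab : q.[a] * q.[b] < 0 by move: hab; rewrite pqr !hornerM mulrACA pmulr_llt0.
have [x xab qx] := IH q szq hq qab.
by exists x => //; rewrite pqr rootM qx.
Qed.
End RealPolynomials.

(* P_k has integer coefficients, so it is preserved by ring morphisms. *)
Lemma map_P {R S : nzRingType} (f : {rmorphism R -> S}) k :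
  map_poly f (P R k) = P S k.
Proof.
rewrite /P rmorphD rmorph1 rmorph_sum; congr (_ + _); apply: eq_bigr => i _.
by rewrite rmorphM /= !rmorphB /= !rmorphXn /= map_polyX.
Qed.

Lemma P_at0 {R : comNzRingType} k : (P R k).[0] = 1.
Proof.
by rewrite horner_P big1 ?addr0 // => i _; rewrite /block !expr0n /= !subr0 mulr0.
Qed.

Lemma P_at1_lt0 {R : numDomainType} k : (P R k).[1] < 0.
Proof.
rewrite horner_P /block; under eq_bigr do rewrite !expr1n mul1r.
rewrite sumr_const card_ord mulrS addrA.
have -> : 1 + (1 - 1 - 1 - 1) = - 1 :> R by ring.
have -> : 1 - 1 - 1 - 1 = - 2 :> R by ring.
by rewrite mulNrn -opprD oppr_lt0 ltr_wpDr ?mulrn_wge0.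
Qed.

(* For x < 0 every block of P_k is positive, hence P_k has no negative root. *)
Lemma block_neg_gt0 {R : numDomainType} (x : R) : x < 0 -> 0 < block x.
Proof.
move=> xn; have xR : x \is Num.real := ltr0_real xn.
have x2 : 0 < x ^+ 2 by rewrite expr2 -mulrNN mulr_gt0 // oppr_gt0.
have -> : block x = (x ^+ 2) ^+ 2 + x ^+ 2 + (- x) * (x + 1) ^+ 2 by rewrite /block; ring.
rewrite ltr_wpDr ?(addr_gt0 (exprn_gt0 _ x2)) //.
by rewrite mulr_ge0 ?oppr_ge0 ?(ltW xn) ?real_exprn_even_ge0 ?rpredD ?rpred1.
Qed.

Lemma P_neg_gt0 {R : numDomainType} k (x : R) : x < 0 -> 0 < (P R k).[x].
Proof.
move=> xn; rewrite horner_P (lt_le_trans ltr01) // lerDl sumr_ge0 // => i _.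
by rewrite mulr_ge0 ?(ltW (block_neg_gt0 xn)) ?real_exprn_even_ge0 ?oddM ?ltr0_real.
Qed.

Lemma add_inv_ge2 {R : numFieldType} (x : R) : 0 < x -> 2 <= x + x^-1.
Proof.
move=> x0; have x0' : x != 0 := lt0r_neq0 x0.
have -> : x + x^-1 = 2 + (x - 1) ^+ 2 / x.
  by apply: (mulIf x0'); rewrite !mulrDl mulfVK // mulVf //; ring.
rewrite lerDl divr_ge0 ?(ltW x0) // real_exprn_even_ge0 //.
by rewrite rpredB ?rpred1 ?gtr0_real.
Qed.

Section Roots.
Variables (C : numClosedFieldType) (k : nat).
Local Notation Pk := (P C k).

Lemma Pk_real : real_poly Pk.
Proof. exact: map_P. Qed.

(* Existence in (0, 1), from P_k(0) = 1 > 0 > P_k(1). *)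
Lemma Pk_root01_exists : exists2 a, 0 < a < 1 & root Pk a.
Proof.
apply: real_poly_ivt Pk_real (real0 _) (real1 _) ltr01 _.
by rewrite P_at0 mul1r P_at1_lt0.
Qed.

Lemma Pk_root_nondegenerate x : root Pk x -> x != 0 /\ x ^+ 2 != 1.
Proof.
move=> /rootP Px; split; first by apply: contra_eq_neq Px => ->; rewrite P_at0 oner_neq0.
rewrite sqrf_eq1 negb_or; apply/andP; split; apply: contra_eq_neq Px => ->.
  by rewrite lt_eqF ?P_at1_lt0.
by rewrite gt_eqF ?P_neg_gt0 ?ltrN10.
Qed.

Lemma Pk_pos_root_inv x : 0 < x -> x != 1 -> root Pk x -> root Pk x^-1.
Proof.
move=> x0 x1; apply: root_P_inv; first exact: lt0r_neq0.
by rewrite pexprn_eq1 ?ltW // negb_or x1.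
Qed.

(* Uniqueness in (0, 1): both roots give roots >= 2 of chebF. *)
Lemma Pk_root01_unique a b : 0 < a < 1 -> 0 < b < 1 -> root Pk a -> root Pk b -> a = b.
Proof.
move=> /andP[a0 a1] /andP[b0 b1] ra rb.
have [a_ne0 a2] := Pk_root_nondegenerate ra; have [b_ne0 b2] := Pk_root_nondegenerate rb.
have := chebF_root_unique (add_inv_ge2 a0) (add_inv_ge2 b0)
  (root_P_chebF a_ne0 a2 ra) (root_P_chebF b_ne0 b2 rb).
case/(add_inv_inj a_ne0 b_ne0) => // ab1.
by have := mulr_ilt1 (ltW a0) (ltW b0) a1 b1; rewrite ab1 ltxx.
Qed.

(* Every root is positive or unimodular: x + 1/x is real, so x is real or
   x x^* = 1, and real roots are positive. *)
Lemma Pk_root_pos_or_unit x : root Pk x -> 0 < x \/ `|x| = 1.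
Proof.
move=> rx; have [x0 x2] := Pk_root_nondegenerate rx.
have sR := chebF_root_real (root_P_chebF x0 x2 rx).
have xc0 : x^* != 0 by rewrite conjC_eq0.
have : x + x^-1 = x^* + x^*^-1 by rewrite -(conj_Creal sR) rmorphD fmorphV.
case/(add_inv_inj x0 xc0) => [xc | /eqP]; last first.
  rewrite -normCK sqrf_eq1 => /orP[/eqP|/eqP n1]; first by right.
  by have := normr_ge0 x; rewrite n1 ler0N1.
left; have xR : x \is Num.real by rewrite CrealE -xc.
case: (real_ltgtP (real0 _) xR) => [//|xn|x00]; last by rewrite -x00 eqxx in x0.
by have := P_neg_gt0 k xn; rewrite (rootP rx) ltxx.
Qed.
End Roots.

Theorem mainTheorem4 (C : numClosedFieldType) (k : nat) :
  exists a : C,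
    [/\ 0 < a < 1, root (P C k) a,
        (forall b : C, 0 < b < 1 -> root (P C k) b -> b = a),
        (forall b : C, 1 < b -> (root (P C k) b <-> b = a^-1))
      & (forall beta : C, root (P C k) beta ->
           [\/ beta = a, beta = a^-1 | `|beta| = 1])].
Proof.
have [a a01 ra] := Pk_root01_exists C k; have /andP[a0 a1] := a01.
have unique01 b : 0 < b < 1 -> root (P C k) b -> b = a.
  by move=> b01 rb; apply: Pk_root01_unique b01 a01 rb ra.
have roots_gt1 b : 1 < b -> root (P C k) b <-> b = a^-1.
  move=> b1; have b0 := lt_trans ltr01 b1; split=> [rb | ->].
    have ib01 : 0 < b^-1 < 1 by rewrite invr_gt0 b0 invf_lt1.
    by rewrite -(unique01 _ ib01) ?invrK // Pk_pos_root_inv ?gt_eqF.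
  by rewrite Pk_pos_root_inv ?lt_eqF.
exists a; split=> // beta rb.
have [b0 | ] := Pk_root_pos_or_unit rb; last by move=> ?; apply: Or33.
have bR : beta \is Num.real := gtr0_real b0.
case: (real_ltgtP bR (real1 _)) => [b1 | b1 | b_eq1].
- by apply: Or31; apply: unique01; rewrite ?b0 ?b1.
- by apply: Or32; apply/roots_gt1.
by have := @P_at1_lt0 C k; rewrite -b_eq1 (rootP rb) ltxx.
Qed.
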